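(* Let $X$ be a metric space, $\Omega\subset X$ non-empty, $E$ a non-trivial locally convex Hausdorff space over $\mathbb{K}$ and $\mathcal{FV}(\Omega)$ a dom-space such that $\mathcal{FV}(\Omega)\subset\mathcal{C}^{ext}(\Omega)$ as a linear subspace. If the map $\delta\colon\Omega\to\mathcal{FV}(\Omega)'_\kappa$, $x\mapsto\delta_x$, belongs to $\mathcal{C}^{ext}(\Omega,\mathcal{FV}(\Omega)'_\kappa)$, then $S(u)\in\mathcal{C}^{ext}(\Omega,E)$ for all $u\in\mathcal{FV}(\Omega)\varepsilon E$.
   Context: $\mathbb{K}\in\{\mathbb{R},\mathbb{C}\}$. For a topological vector space $Z$, $\mathcal{C}^{ext}(\Omega,Z)$ is the space of continuous $f\colon\Omega\to Z$ having a continuous extension to the closure $\overline{\Omega}$ of $\Omega$ in $X$; $\mathcal{C}^{ext}(\Omega):=\mathcal{C}^{ext}(\Omega,\mathbb{K})$. Framework: $J,M$ non-empty index sets, $(\omega_m)_{m\in M}$ non-empty sets, $\nu_{j,m}\colon\omega_m\to[0,\infty)$ such that for all $m$, $x\in\omega_m$ some $\nu_{j,m}(x)>0$; $\operatorname{AP}(\Omega)\subset\mathbb{K}^\Omega$ a linear subspace; $T_m\colon\operatorname{dom}T_m\to\mathbb{K}^{\omega_m}$ linear maps on linear subspaces of $\mathbb{K}^\Omega$; $\mathcal{FV}(\Omega):=\{f\in\operatorname{AP}(\Omega)\cap\bigcap_m\operatorname{dom}T_m: |f|_{j,m}:=\sup_{x\in\omega_m}|T_m(f)(x)|\nu_{j,m}(x)<\infty\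 \forall j,m\}$ with these seminorms. It is a dom-space if it is Hausdorff, the seminorms are directed and every $\delta_x\colon f\mapsto f(x)$ belongs to $\mathcal{FV}(\Omega)'$. $\mathcal{FV}(\Omega)'_\kappa$: dual with the topology of uniform convergence on absolutely convex compact subsets of $\mathcal{FV}(\Omega)$. $\mathcal{FV}(\Omega)\varepsilon E$: continuous linear maps $\mathcal{FV}(\Omega)'_\kappa\to E$ with the topology of uniform convergence on equicontinuous sets; $S(u)(x):=u(\delta_x)$. *)

From HB Require Import structures.
From mathcomp Require Import all_boot all_order all_algebra.
From mathcomp Require Import all_classical all_reals all_analysis.
From mathcomp Require complex.
Import complex.ComplexField.


Import Order.TTheory GRing.Theory Num.Theory.
Import numFieldTopology.Exports.

Local Open Scope classical_set_scope.
Local Open Scope ring_scope.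

(* Functions on Omega are functions on the type [Om] (later: the       *)
(* subtype [set_type A] of a metric space X).                          *)
Record fv_data (K : numFieldType) (Om : Type) := FVData {
  fv_J : Type;
  fv_M : Type;
  fv_om : fv_M -> Type;
  fv_nu : fv_J -> forall m : fv_M, fv_om m -> K;
  fv_AP : set (Om -> K);
  fv_dom : fv_M -> set (Om -> K);
  fv_T : forall m : fv_M, (Om -> K) -> fv_om m -> K }.

Arguments fv_J {K Om} _.
Arguments fv_M {K Om} _.
Arguments fv_om {K Om} _.
Arguments fv_nu {K Om} _.
Arguments fv_AP {K Om} _.
Arguments fv_dom {K Om} _.
Arguments fv_T {K Om} _.


Section FV.
Context {K : numFieldType} {Om : Type}.

Definition lin_subspace (S : set (Om -> K)) : Prop :=
  S (fun=> 0) /\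
  forall (a : K) (f g : Om -> K), S f -> S g -> S (fun x => a * f x + g x).

Definition fv_hyp (D : fv_data K Om) : Prop :=
  inhabited (fv_J D) /\ inhabited (fv_M D) /\
  (forall m, inhabited (fv_om D m)) /\
  (forall j m x, 0 <= fv_nu D j m x) /\
  (forall m x, exists j, 0 < fv_nu D j m x) /\
  lin_subspace (fv_AP D) /\
  (forall m, lin_subspace (fv_dom D m)) /\
  (forall m (a : K) (f g : Om -> K), fv_dom D m f -> fv_dom D m g ->
     fv_T D m (fun x => a * f x + g x) =
     (fun y => a * fv_T D m f y + fv_T D m g y)).

(* [snle D f m j r] : |f|_{j,m} = sup_x |T_m(f)(x)| nu_{j,m}(x) <= r *)
Definition snle (D : fv_data K Om) (f : Om -> K) (m : fv_M D) (j : fv_J D)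
  (r : K) : Prop :=
  forall x : fv_om D m, `|fv_T D m f x| * fv_nu D j m x <= r.

Definition inFV (D : fv_data K Om) (f : Om -> K) : Prop :=
  [/\ fv_AP D f, (forall m, fv_dom D m f) &
      (forall j m, exists r : K, snle D f m j r)].

Definition FVt (D : fv_data K Om) := {f : Om -> K | inFV D f}.
End FV.

HB.instance Definition _ (K : numFieldType) (Om : Type) (D : fv_data K Om) :=
  gen_eqMixin (FVt D).
HB.instance Definition _ (K : numFieldType) (Om : Type) (D : fv_data K Om) :=
  gen_choiceMixin (FVt D).

Section FVtop.
Context {K : numFieldType} {Om : Type} (D : fv_data K Om).

Definition sn_lt (j : fv_J D) (m : fv_M D) (f g : FVt D) (e : K) : Prop :=
  exists2 r : K, r < e & snle D (fun x => proj1_sig g x - proj1_sig f x) m j r.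

Definition FV_subbase : set (set (FVt D)) :=
  [set B | exists (f : FVt D) (j : fv_J D) (m : fv_M D) (e : K),
      0 < e /\ B = [set g | sn_lt j m f g e]].
End FVtop.

HB.instance Definition _ (K : numFieldType) (Om : Type) (D : fv_data K Om) :=
  isSubBaseTopological.Build (FVt D) (@FV_subbase K Om D) id.

Section Dual.
Context {K : numFieldType} {Om : Type} (D : fv_data K Om).

Definition lin_functional (y : FVt D -> K) : Prop :=
  forall (a : K) (f g h : FVt D),
    (forall x, proj1_sig h x = a * proj1_sig f x + proj1_sig g x) ->
    y h = a * y f + y g.

Definition DualT := {y : FVt D -> K | lin_functional y /\ continuous y}.
End Dual.

HB.instance Definition _ (K : numFieldType) (Om : Type) (D : fv_data K Om) :=
  gen_eqMixin (DualT D).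
HB.instance Definition _ (K : numFieldType) (Om : Type) (D : fv_data K Om) :=
  gen_choiceMixin (DualT D).

Section Kappa.
Context {K : numFieldType} {Om : Type} (D : fv_data K Om).

Definition abs_convex (C : set (FVt D)) : Prop :=
  forall (f g h : FVt D) (a b : K), C f -> C g -> `|a| + `|b| <= 1 ->
    (forall x, proj1_sig h x = a * proj1_sig f x + b * proj1_sig g x) -> C h.

Definition kappa_subbase : set (set (DualT D)) :=
  [set B | exists (y0 : DualT D) (C : set (FVt D)) (e : K),
     [/\ abs_convex C, compact C, 0 < e &
         B = [set y | exists2 r : K, r < e &
               forall f, C f -> `|proj1_sig y f - proj1_sig y0 f| <= r]]].
End Kappa.

HB.instance Definition _ (K : numFieldType) (Om : Type) (D : fv_data K Om) :=
  isSubBaseTopological.Build (DualT D) (@kappa_subbase K Om D) id.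

Section DomSpace.
Context {K : numFieldType} {Om : Type} (D : fv_data K Om).

Definition directed_seminorms : Prop :=
  forall (j1 : fv_J D) (m1 : fv_M D) (j2 : fv_J D) (m2 : fv_M D),
  exists (j : fv_J D) (m : fv_M D) (C : K), 0 <= C /\
    forall (f : FVt D) (r : K), snle D (proj1_sig f) m j r ->
      snle D (proj1_sig f) m1 j1 (C * r) /\ snle D (proj1_sig f) m2 j2 (C * r).

Definition dom_space : Prop :=
  [/\ hausdorff_space (FVt D), directed_seminorms &
      forall x : Om, continuous (fun f : FVt D => proj1_sig f x)].

Definition eps_prod {E : tvsType K} (u : DualT D -> E) : Prop :=
  (forall (a : K) (y1 y2 y3 : DualT D),
     (forall f, proj1_sig y3 f = a * proj1_sig y1 f + proj1_sig y2 f) ->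
     u y3 = a *: u y1 + u y2) /\ continuous u.
End DomSpace.

Definition Cext {X : topologicalType} (A : set X) {Z : topologicalType}
  (f : set_type A -> Z) : Prop :=
  continuous f /\
  exists g : X -> Z, {within closure A, continuous g} /\
                     forall x : set_type A, g (proj1_sig x) = f x.

Definition prop48_stmt (R : realType) (K : numFieldType) : Prop :=
  forall (X : metricType R) (A : set X), A !=set0 ->
  forall (E : tvsType K), hausdorff_space E -> (exists e : E, e != 0) ->
  forall (D : fv_data K (set_type A)), fv_hyp D -> dom_space D ->
  (forall f : FVt D, Cext A (proj1_sig f)) ->
  forall delta : set_type A -> DualT D,
    (forall x f, proj1_sig (delta x) f = proj1_sig f x) ->
    Cext A delta ->
  forall u : DualT D -> E, eps_prod D u ->
    Cext A (fun x => u (delta x)).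

From HB Require Import structures.
From mathcomp Require Import all_boot all_order all_algebra.
From mathcomp Require Import all_classical all_reals all_analysis.
From mathcomp Require complex.
Import complex.ComplexField.

Lemma Cext_comp {X : topologicalType} (A : set X) {Y Z : topologicalType}
    (h : Y -> Z) (f : set_type A -> Y) :
  continuous h -> Cext A f -> Cext A (h \o f).
Proof.
move=> ch [cf [g [cg gf]]]; split.
  by move=> x; apply: continuous_comp; [exact: cf | exact: ch].
exists (h \o g); split; last by move=> x /=; rewrite gf.
move=> x.
exact: (@continuous_comp _ _ _ (from_subspace (closure A) g) h x (cg x) (ch _)).
Qed.

Lemma eps_prod_Cext (R : realType) (K : numFieldType) : prop48_stmt R K.
Proof.
move=> X A _ E _ _ D _ _ _ delta _ Cext_delta u [_ cu].
exact: Cext_comp cu Cext_delta.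
Qed.

Theorem proposition4p8 :
  forall R : realType, prop48_stmt R R /\ prop48_stmt R (complex.complex R).
Proof. by move=> R; split; exact: eps_prod_Cext. Qed.
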